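(* Let $q$ be a prime power and let $n,k$ be integers with $3\le k\le n-2\le q-2$. Let $\Lambda=\{\alpha_1,\dots,\alpha_n\}\subseteq\mathbb{F}_q$ with the $\alpha_i$ pairwise distinct, and let $C_{k-1,k-2}$ be the linear code generated by the $k\times n$ matrix whose rows are $(\alpha_1^{e},\dots,\alpha_n^{e})$ for $e=0,1,\dots,k-3,k,k+1$. Then $C_{k-1,k-2}$ is MDS if and only if $$\sigma_2(\beta_1,\dots,\beta_k)^2-\sigma_1(\beta_1,\dots,\beta_k)\,\sigma_3(\beta_1,\dots,\beta_k)\neq 0$$ for every $k$-element subset $\{\beta_1,\dots,\beta_k\}\subseteq\Lambda$ (with the $\beta_i$ distinct).
   Context: Convention: $0^0=1$. $\sigma_t(x_1,\dots,x_m)$ denotes the $t$-th elementary symmetric polynomial ($\sigma_0=1$, $\sigma_t=0$ for $t>m$). An $[n,k,d]$ linear code is MDS if $d=n-k+1$. *)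

From HB Require Import structures.
From mathcomp Require Import all_boot all_order all_algebra all_field.
Set Implicit Arguments. Unset Strict Implicit. Unset Printing Implicit Defensive.
Import GRing.Theory.
Local Open Scope ring_scope.

Definition wt (F : fieldType) (n : nat) (c : 'rV[F]_n) : nat :=
  #|[set j : 'I_n | c 0 j != 0]|.

(* The linear code generated by G is its row space: codewords c with (c <= G)%MS.
   Its dimension is \rank G.  Minimum distance = least weight of a nonzero
   codeword (n.+1 if there is none). *)
Definition min_dist (F : finFieldType) (m n : nat) (G : 'M[F]_(m, n)) : nat :=
  \big[minn/n.+1]_(c : 'rV[F]_n | (c <= G)%MS && (c != 0)) wt c.

Definition is_MDS (F : finFieldType) (m n : nat) (G : 'M[F]_(m, n)) : Prop :=
  min_dist G = (n - \rank G + 1)%N.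

Definition expo (k : nat) (i : nat) : nat := if (i < k - 2)%N then i else (i + 2)%N.

Definition Gmat (F : fieldType) (n k : nat) (a : 'I_n -> F) : 'M[F]_(k, n) :=
  \matrix_(i < k, j < n) a j ^+ expo k i.

Definition sigma (F : fieldType) (n : nat) (a : 'I_n -> F) (t : nat)
    (S : {set 'I_n}) : F :=
  \sum_(T : {set 'I_n} | (T \subset S) && (#|T| == t)) \prod_(j in T) a j.

(* A codeword of C_{k-1,k-2} is the evaluation vector on the a j of a polynomial f in
   the span of 1, X, ..., X^(k-3), X^k, X^(k+1).  A nonzero such f has at most
   k + 1 < n roots, so the code has dimension k, and by the Singleton bound it is MDS
   iff no nonzero such f vanishes on k of the points.  If f vanishes on S with
   #|S| = k, then f = (g0 + g1 X) * prod_(j in S) (X - a j), and the vanishing of the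
   coefficients of X^(k-1) and X^(k-2) in f is the linear system
   - s1 g0 + s2 g1 = 0, s2 g0 - s3 g1 = 0 in (g0, g1), with s_t = sigma_t(S); it has
   a nonzero solution iff s2^2 - s1 s3 = 0. *)

From HB Require Import structures.
From mathcomp Require Import all_boot all_order all_algebra all_field.
From mathcomp Require Import zify ring.
Set Implicit Arguments. Unset Strict Implicit. Unset Printing Implicit Defensive.
Import GRing.Theory.
Local Open Scope ring_scope.

Lemma nontrivial_solution2P (F : fieldType) (a b c d : F) :
  (exists x y : F, [/\ (x, y) != (0, 0), x * a + y * c = 0 & x * b + y * d = 0])
  <-> a * d = b * c.
Proof.
split=> [[x [y [xy0 Ea Eb]]] | det0].
  have /eqP Ex : x * (a * d - b * c) = 0.
    transitivity (d * (x * a + y * c) - c * (x * b + y * d)); first ring.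
    by rewrite Ea Eb; ring.
  have /eqP Ey : y * (a * d - b * c) = 0.
    transitivity (a * (x * b + y * d) - b * (x * a + y * c)); first ring.
    by rewrite Ea Eb; ring.
  apply/eqP; rewrite -subr_eq0; apply: contraNT xy0 => /negPf D0.
  by move: Ex Ey; rewrite !mulf_eq0 D0 !orbF xpair_eqE => -> ->.
have [ac0 | ac_neq0] := eqVneq (c, - a) (0, 0).
  move: ac0 => [-> /eqP]; rewrite oppr_eq0 => /eqP ->.
  have [bd0 | bd_neq0] := eqVneq (d, - b) (0, 0).
    move: bd0 => [-> /eqP]; rewrite oppr_eq0 => /eqP ->.
    by exists 1, 0; rewrite xpair_eqE oner_eq0; split=> //; ring.
  by exists d, (- b); split=> //; ring.
by exists c, (- a); split=> //; [ring | rewrite [c * b]mulrC -det0; ring].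
Qed.

Section LinearPoly.
Variable R : nzRingType.
Implicit Types g p : {poly R}.

Lemma coefM_size2 g p m : (size g <= 2)%N ->
  (g * p)`_m.+1 = g`_0 * p`_m.+1 + g`_1 * p`_m.
Proof.
move=> g2; rewrite coefM !big_ord_recl big1 => [|i _].
  by rewrite addr0 /= subn0 subn1.
by rewrite /= nth_default ?mul0r // (leq_trans g2).
Qed.

Lemma size2_poly_eq0 g : (size g <= 2)%N -> (g == 0) = (g`_0 == 0) && (g`_1 == 0).
Proof.
move=> g2; apply/idP/andP => [/eqP -> | [/eqP g0 /eqP g1]]; first by rewrite !coef0 eqxx.
apply/eqP/polyP=> [[|[|i]]]; rewrite ?coef0 //.
by rewrite nth_default // (leq_trans g2).
Qed.

End LinearPoly.

Lemma card_roots_lt_size (F : fieldType) (n : nat) (a : 'I_n -> F) (f : {poly F}) :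
  injective a -> f != 0 -> (#|[set j | root f (a j)]| < size f)%N.
Proof.
move=> inj_a f0; rewrite cardE -(size_map a).
apply: max_poly_roots f0 _ _; last by rewrite map_inj_uniq ?enum_uniq.
by apply/allP=> x /mapP[j]; rewrite mem_enum inE => fj ->.
Qed.

Lemma subset_of_card (T : finType) (A : {set T}) k : (k <= #|A|)%N ->
  exists2 B : {set T}, B \subset A & #|B| = k.
Proof.
move=> kA; exists [set x in take k (enum A)].
  by apply/subsetP=> x; rewrite inE => /mem_take; rewrite mem_enum.
by rewrite cardsE (card_uniqP (take_uniq _ (enum_uniq _))) size_takel // -cardE.
Qed.

Definition gap_poly (R : nzRingType) (k : nat) (f : {poly R}) : bool :=
  [&& (size f <= k.+2)%N, f`_(k - 2) == 0 & f`_(k - 1) == 0].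

Section VanishingPoly.
Variables (F : fieldType) (n : nat) (a : 'I_n -> F).
Implicit Type S : {set 'I_n}.

Definition vpoly S : {poly F} := \prod_(j in S) ('X - (a j)%:P).

Lemma vpoly_expand S : vpoly S = \sum_(J : {set 'I_n} | J \subset S)
  ((-1) ^+ #|J| * \prod_(j in J) a j) *: 'X^(#|S| - #|J|).
Proof.
pose u j := if j \in S then - (a j)%:P else 0.
pose v j : {poly F} := if j \in S then 'X else 1.
have -> : vpoly S = \prod_j (u j + v j).
  rewrite /vpoly big_mkcond; apply: eq_bigr => j _.
  by rewrite /u /v; case: (j \in S); rewrite ?add0r // addrC.
rewrite bigA_distr (bigID (fun J : {set 'I_n} => J \subset S)) /=.
rewrite [X in _ + X]big1 ?addr0 => [|J /subsetPn[j jJ jS]]; last first.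
  by rewrite (bigD1 j) //= jJ /u (negbTE jS) mul0r.
apply: eq_bigr => J JS; rewrite (bigID (mem J)) /=.
rewrite (eq_bigr (fun j => - (a j)%:P)) => [|j jJ]; last by rewrite jJ /u (subsetP JS).
rewrite [X in _ * X](eq_bigr v) => [|j jJ]; last by rewrite (negbTE jJ).
rewrite /v -big_mkcondr prodr_const prodrN -rmorph_prod -mul_polyC.
rewrite rmorphM rmorphXn rmorphN1 -(cardsDS JS); congr (_ * 'X^_).
by apply: eq_card => j; rewrite !inE.
Qed.

Lemma coef_vpoly S t : (t <= #|S|)%N -> (vpoly S)`_(#|S| - t) = (-1) ^+ t * sigma a t S.
Proof.
move=> tS; rewrite vpoly_expand coef_sum /sigma mulr_sumr big_mkcond [RHS]big_mkcond /=.
apply: eq_bigr => J _; case: (boolP (J \subset S)) => //= JS.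
rewrite coefZ coefXn.
have JleS := subset_leq_card JS.
have -> : (#|S| - t == #|S| - #|J|)%N = (#|J| == t) by apply/eqP/eqP; lia.
by case: eqP => [-> | _]; rewrite ?mulr1 ?mulr0.
Qed.

Lemma vpoly_monic S : vpoly S \is monic.
Proof. exact: monic_prod_XsubC. Qed.

Lemma size_vpoly S : size (vpoly S) = #|S|.+1.
Proof. by rewrite /vpoly -big_enum size_prod_XsubC cardE. Qed.

Lemma vpoly_root S j : j \in S -> root (vpoly S) (a j).
Proof.
by move=> jS; apply/rootP; rewrite horner_prod (bigD1 j) //= hornerXsubC subrr mul0r.
Qed.

Lemma vpoly_dvd S f : injective a -> {in S, forall j, root f (a j)} ->
  exists g, f = g * vpoly S.
Proof.
move=> inj_a fS; rewrite /vpoly -big_enum -(big_map a predT (fun x => 'X - x%:P)).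
apply: uniq_roots_prod_XsubC; last by rewrite uniq_rootsE map_inj_uniq ?enum_uniq.
by apply/allP=> x /mapP[j]; rewrite mem_enum => /fS ? ->.
Qed.

Lemma vanishing_gap_polyP S : injective a -> (3 <= #|S|)%N ->
  (exists f, [/\ f != 0, gap_poly #|S| f & {in S, forall j, root f (a j)}]) <->
  sigma a 2 S ^+ 2 - sigma a 1 S * sigma a 3 S = 0.
Proof.
move=> inj_a S_ge3.
have c1 : (vpoly S)`_(#|S| - 1) = - sigma a 1 S.
  by rewrite coef_vpoly; [ring | apply: leq_trans S_ge3].
have c2 : (vpoly S)`_(#|S| - 2) = sigma a 2 S.
  by rewrite coef_vpoly; [ring | apply: ltnW].
have c3 : (vpoly S)`_(#|S| - 3) = - sigma a 3 S by rewrite coef_vpoly //; ring.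
move: c1 c2 c3; move: (sigma a 1 S) (sigma a 2 S) (sigma a 3 S) => s1 s2 s3 c1 c2 c3.
set k := #|S| in S_ge3 c1 c2 c3 *.
have [k1 k2] : (k - 1 = (k - 2).+1)%N /\ (k - 2 = (k - 3).+1)%N by lia.
have coefM1 (g : {poly F}) : (size g <= 2)%N ->
    (g * vpoly S)`_(k - 1) = g`_0 * - s1 + g`_1 * s2.
  by move=> g2; rewrite k1 coefM_size2 // -k1 c1 c2.
have coefM2 (g : {poly F}) : (size g <= 2)%N ->
    (g * vpoly S)`_(k - 2) = g`_0 * s2 + g`_1 * - s3.
  by move=> g2; rewrite k2 coefM_size2 // -k2 c2 c3.
transitivity (exists x y : F,
    [/\ (x, y) != (0, 0), x * - s1 + y * s2 = 0 & x * s2 + y * - s3 = 0]); last first.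
  rewrite nontrivial_solution2P mulrNN expr2.
  by split=> [-> | /eqP]; [rewrite subrr | rewrite subr_eq0 => /eqP].
split=> [[f [f0 /and3P[f_size /eqP f_k2 /eqP f_k1] fS]] | [x [y [xy0 E1 E2]]]].
  have [g fg] := vpoly_dvd inj_a fS.
  have g0 : g != 0 by apply: contraNneq f0 => g0; rewrite fg g0 mul0r.
  have g2 : (size g <= 2)%N.
    move: f_size; rewrite fg size_Mmonic ?vpoly_monic // size_vpoly.
    by rewrite addnS -addn2 addnC leq_add2l.
  exists g`_0, g`_1; split; first by rewrite xpair_eqE -size2_poly_eq0.
    by rewrite -coefM1 // -fg.
  by rewrite -coefM2 // -fg.
pose g := Poly [:: x; y].
have g2 : (size g <= 2)%N := size_Poly _.
have g0 : g != 0 by rewrite size2_poly_eq0 // !coef_Poly -xpair_eqE.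
exists (g * vpoly S); split.
- exact: mulf_neq0 g0 (monic_neq0 (vpoly_monic S)).
- apply/and3P; split; last by rewrite coefM1 // !coef_Poly E1.
    by rewrite size_Mmonic ?vpoly_monic // size_vpoly addnS -addn2 addnC leq_add2l.
  by rewrite coefM2 // !coef_Poly E2.
- by move=> j jS; rewrite rootM vpoly_root ?orbT.
Qed.

End VanishingPoly.

Definition zero_set (F : fieldType) (n : nat) (c : 'rV[F]_n) : {set 'I_n} :=
  [set j | c 0 j == 0].

Lemma wtE (F : fieldType) (n : nat) (c : 'rV[F]_n) : wt c = (n - #|zero_set c|)%N.
Proof.
have -> : wt c = #|~: zero_set c| by apply: eq_card => j; rewrite !inE.
by rewrite cardsCs setCK card_ord.
Qed.

Section LinearCode.
Variables (F : finFieldType) (m n : nat) (G : 'M[F]_(m, n)).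

Lemma min_dist_le_wt c : (c <= G)%MS -> c != 0 -> (min_dist G <= wt c)%N.
Proof.
move=> cG c0; rewrite /min_dist; have : c \in index_enum _ := mem_index_enum c.
elim: (index_enum _) => [//|c' r IH]; rewrite inE big_cons => /predU1P[<- | /IH le_r].
  by rewrite cG c0 geq_minl.
by case: ifP => // _; rewrite geq_min le_r orbT.
Qed.

Lemma min_dist_leqSn : (min_dist G <= n.+1)%N.
Proof.
apply: (big_ind (fun d => d <= n.+1)%N) => // [d d' dn _ | c _].
  by rewrite geq_min dn.
by rewrite ltnW // ltnS -{2}[n]card_ord max_card.
Qed.

Lemma leq_min_dist d : (d <= n.+1)%N ->
  (forall c, (c <= G)%MS -> c != 0 -> (d <= wt c)%N) -> (d <= min_dist G)%N.
Proof.
move=> dn d_wt; apply: (big_ind (fun x => d <= x)%N) => // [x y dx dy | c /andP[]].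
  by rewrite leq_min dx dy.
exact: d_wt.
Qed.

Lemma min_dist_singleton : (min_dist G <= n - \rank G + 1)%N.
Proof.
have [r0 | r_gt0] := posnP (\rank G); first by rewrite r0 subn0 addn1 min_dist_leqSn.
have r_le_n := rank_leq_col G; have r_le_m := rank_leq_row G.
have hr : ((\rank G).-1 <= n)%N by lia.
pose A := colsub (widen_ord hr) G.
(* Some message kills the first (rank G).-1 columns but not G: A has the larger kernel. *)
have : ~~ (kermx A <= kermx G)%MS.
  apply: contraTN (rank_leq_col A) => /mxrankS; rewrite !mxrank_ker -ltnNge; lia.
case/row_subPn=> i; rewrite sub_kermx => c_neq0.
have cA : row i (kermx A) *m A = 0 by apply/sub_kermxP; exact: row_sub.
apply: leq_trans (min_dist_le_wt (submxMl _ _) c_neq0) _.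
rewrite wtE; suff : ((\rank G).-1 <= #|zero_set (row i (kermx A) *m G)|)%N by lia.
have widen_inj : injective (widen_ord hr) by move=> x y [] /val_inj.
rewrite -[X in (X <= _)%N]card_ord -(card_imset _ widen_inj).
apply/subset_leq_card/subsetP => _ /imsetP[j _ ->]; rewrite inE.
by move/matrixP: cA => /(_ 0 j); rewrite mulmx_colsub mxE => ->; rewrite mxE.
Qed.

Lemma MDS_zero_setP : is_MDS G <->
  forall c, (c <= G)%MS -> c != 0 -> (#|zero_set c| < \rank G)%N.
Proof.
have r_le_n := rank_leq_col G.
split=> [MDS_G c cG c0 | few_zeros].
  have := min_dist_le_wt cG c0; rewrite MDS_G wtE.
  have := max_card (zero_set c); rewrite card_ord; lia.
apply/eqP; rewrite /is_MDS eqn_leq min_dist_singleton /=.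
apply: leq_min_dist => [|c cG c0]; first lia.
rewrite wtE; have := few_zeros c cG c0.
by have := max_card (zero_set c); rewrite card_ord; lia.
Qed.

End LinearCode.

Lemma expo_inj k : injective (fun i : 'I_k => expo k i).
Proof.
move=> i i'; rewrite /expo => e; apply: val_inj; move: e.
by case: ifP; case: ifP => /=; lia.
Qed.

Lemma expoP k m : (2 <= k)%N ->
  reflect (exists i : 'I_k, m = expo k i)
          [&& (m < k.+2)%N, m != (k - 2)%N & m != (k - 1)%N].
Proof.
move=> k_ge2; apply: (iffP and3P) => [[m_lt m_k2 m_k1] | [i ->]].
  have [m_small | m_big] := ltnP m (k - 2).
    by exists (Ordinal (leq_trans m_small (leq_subr 2 k))); rewrite /expo /= m_small.
  have m2_lt : (m - 2 < k)%N by lia.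
  by exists (Ordinal m2_lt); rewrite /expo /=; case: ifP; lia.
by rewrite /expo; have := ltn_ord i; case: ifP; split; lia.
Qed.

Section GapCode.
Variables (F : fieldType) (n k : nat) (a : 'I_n -> F).
Hypothesis k_ge2 : (2 <= k)%N.
Implicit Types (u : 'rV[F]_k) (i : 'I_k) (f : {poly F}).

Definition row_poly (u : 'rV[F]_k) : {poly F} := \sum_(i < k) u 0 i *: 'X^(expo k i).

Definition eval_row (f : {poly F}) : 'rV[F]_n := \row_j f.[a j].

Lemma coef_row_poly_expo u i : (row_poly u)`_(expo k i) = u 0 i.
Proof.
rewrite coef_sum (bigD1 i) //= coefZ coefXn eqxx mulr1 big1 ?addr0 // => i' i'_neq_i.
by rewrite coefZ coefXn (inj_eq (@expo_inj k)) eq_sym (negbTE i'_neq_i) mulr0.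
Qed.

Lemma coef_row_poly_gap u m :
  ~~ [&& (m < k.+2)%N, m != (k - 2)%N & m != (k - 1)%N] -> (row_poly u)`_m = 0.
Proof.
move=> m_gap; rewrite coef_sum big1 // => i _; rewrite coefZ coefXn.
by case: eqP => [m_expo | _]; rewrite ?mulr0 //; case/expoP: m_gap; last exists i.
Qed.

Lemma row_poly_gap u : gap_poly k (row_poly u).
Proof.
apply/and3P; split; try by apply/eqP/coef_row_poly_gap; rewrite eqxx !andbF.
by apply/leq_sizeP => m m_ge; rewrite coef_row_poly_gap // ltnNge m_ge.
Qed.

Lemma row_poly_eq0 u : (row_poly u == 0) = (u == 0).
Proof.
apply/eqP/eqP => [u0 | ->]; last by rewrite /row_poly big1 // => i _; rewrite mxE scale0r.
by apply/rowP=> i; rewrite mxE -coef_row_poly_expo u0 coef0.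
Qed.

Lemma gap_row_polyP f : gap_poly k f -> exists u, row_poly u = f.
Proof.
case/and3P=> f_size /eqP f_k2 /eqP f_k1; exists (\row_i f`_(expo k i)).
apply/polyP=> m; have [[i ->] | m_gap] := altP (expoP m k_ge2).
  by rewrite coef_row_poly_expo mxE.
rewrite coef_row_poly_gap //; move: m_gap; rewrite !negb_and !negbK -leqNgt.
by case/or3P=> [/(leq_trans f_size)/leq_sizeP-> | /eqP-> | /eqP->].
Qed.

Lemma mul_Gmat u : u *m Gmat k a = eval_row (row_poly u).
Proof.
apply/rowP=> j; rewrite !mxE horner_sum; apply: eq_bigr => i _.
by rewrite !mxE hornerZ hornerXn.
Qed.

Lemma zero_set_eval_row f : zero_set (eval_row f) = [set j | root f (a j)].
Proof. by apply/setP=> j; rewrite !inE mxE. Qed.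

Hypotheses (inj_a : injective a) (kn : (k + 2 <= n)%N).

Lemma eval_row_gap_eq0 f : gap_poly k f -> (eval_row f == 0) = (f == 0).
Proof.
move=> /and3P[f_size _ _]; apply/idP/idP => [/eqP f_ev0 | /eqP ->]; last first.
  by apply/eqP/rowP=> j; rewrite !mxE horner0.
apply/negPn/negP => f0; have := card_roots_lt_size inj_a f0.
have -> : [set j | root f (a j)] = [set: 'I_n].
  by apply/setP=> j; rewrite -zero_set_eval_row f_ev0 !inE mxE eqxx.
by rewrite cardsT card_ord ltnNge (leq_trans f_size) // -addn2.
Qed.

Lemma rank_Gmat : \rank (Gmat k a) = k.
Proof.
apply/eqP/inj_row_free => u; rewrite mul_Gmat => /eqP.
by rewrite eval_row_gap_eq0 ?row_poly_gap // row_poly_eq0 => /eqP.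
Qed.

Lemma Gmat_codewordP c :
  reflect (exists2 f, gap_poly k f & c = eval_row f) (c <= Gmat k a)%MS.
Proof.
apply: (iffP submxP) => [[u ->] | [f /gap_row_polyP[u <-] ->]].
  by exists (row_poly u); rewrite ?row_poly_gap ?mul_Gmat.
by exists u; rewrite mul_Gmat.
Qed.

End GapCode.

Theorem corollary3p5 (F : finFieldType) (q n k : nat) (a : 'I_n -> F) :
  #|F| = q ->
  (3 <= k)%N -> (k + 2 <= n)%N -> (n <= q)%N ->
  injective a ->
  is_MDS (@Gmat F n k a) <->
  (forall S : {set 'I_n}, #|S| = k ->
     sigma a 2 S ^+ 2 - sigma a 1 S * sigma a 3 S != 0).
Proof.
move=> _ k_ge3 kn _ inj_a; have k_ge2 := ltnW k_ge3.
rewrite MDS_zero_setP rank_Gmat //.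
split=> [few_zeros S Sk | disc_neq0 c /(Gmat_codewordP a k_ge2)[f gap_f ->] ev_neq0].
  apply/eqP; rewrite -(vanishing_gap_polyP inj_a) Sk // => -[f [f_neq0 gap_f f_S]].
  have ev_neq0 : eval_row a f != 0 by rewrite (eval_row_gap_eq0 inj_a kn gap_f).
  have ev_code : (eval_row a f <= Gmat k a)%MS by apply/(Gmat_codewordP _ k_ge2); exists f.
  have := few_zeros _ ev_code ev_neq0.
  rewrite zero_set_eval_row ltnNge -{1}Sk => /negP; apply.
  by apply/subset_leq_card/subsetP=> j /f_S; rewrite inE.
have f_neq0 : f != 0 by rewrite -(eval_row_gap_eq0 inj_a kn gap_f).
rewrite zero_set_eval_row ltnNge; apply/negP => /subset_of_card[S S_roots Sk].
move/eqP: (disc_neq0 S Sk); apply; rewrite -(vanishing_gap_polyP inj_a) Sk //.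
by exists f; split=> // j /(subsetP S_roots); rewrite inE.
Qed.
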